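(* Let $(a_n)_{n\ge1}$ be an integer sequence such that $a_1=0$, $p\mid a_p$ for every prime $p$, and $a_n=a_{\operatorname{rad}(n)}$ for all $n>1$. Then $(a_n)$ is an Euler–Gauss sequence, i.e. $A_n^+\equiv A_n^-\pmod n$ for all $n\ge1$.
   Context: $\mu$ is the Möbius function and $\operatorname{rad}(n)=\prod_{p\mid n,\,p\text{ prime}}p$. For $n\ge1$, $A_n^+=\prod_{d\mid n,\ \mu(d)=1} a_{n/d}$ and $A_n^-=\prod_{d\mid n,\ \mu(d)=-1} a_{n/d}$ (empty products equal $1$). *)

From mathcomp Require Import all_boot all_order all_algebra.
From mathcomp Require Import intdiv.
Set Implicit Arguments. Unset Strict Implicit. Unset Printing Implicit Defensive.
Import GRing.Theory Num.Theory.
Local Open Scope ring_scope.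

Definition squarefree (n : nat) : bool :=
  (0 < n)%N && all (fun p => logn p n == 1%N) (primes n).

Definition moebius (n : nat) : int :=
  if squarefree n then (-1) ^+ size (primes n) else 0.

Definition radical (n : nat) : nat := \prod_(p <- primes n) p.

(* A_n^+ and A_n^- for an integer sequence a (indexed by nat; a 0 unused) *)
Definition Aplus (a : nat -> int) (n : nat) : int :=
  \prod_(d <- divisors n | moebius d == 1) a (n %/ d)%N.

Definition Aminus (a : nat -> int) (n : nat) : int :=
  \prod_(d <- divisors n | moebius d == -1) a (n %/ d)%N.

From mathcomp Require Import all_boot all_order all_algebra.
From mathcomp Require Import intdiv.
Import GRing.Theory.
Local Open Scope ring_scope.

(* If n is squarefree, the product with sign mu(n) contains the factor
   a_(n/n) = a_1 = 0, while the product with sign -mu(n) contains, for every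
   prime p | n, the factor a_p (from d = n/p), so it is divisible by each p | n
   and hence by n.  If q^2 | n for a prime q, then d |-> d*q or d/q (according
   as q does not or does divide d) is an involution of the squarefree divisors
   of n flipping mu(d).  Since q^2 | n and dq is squarefree, q | n/(dq), so
   n/d = q * n/(dq) and n/(dq) have the same radical; the factors match and
   A_n^+ = A_n^-. *)

Lemma big_filter_involution {R : Type} {idx : R} {op : Monoid.com_law idx}
    {T : eqType} (f : T -> T) (s : seq T) (P Q : pred T) (F : T -> R) :
  uniq s ->
  (forall x, x \in s -> P x ->
     [/\ f x \in s, Q (f x), f (f x) = x & F (f x) = F x]) ->
  (forall x, x \in s -> Q x -> [/\ f x \in s, P (f x) & f (f x) = x]) ->
  \big[op/idx]_(x <- s | P x) F x = \big[op/idx]_(x <- s | Q x) F x.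
Proof.
move=> s_uniq fP fQ; rewrite -big_filter -[RHS]big_filter.
have memP x : x \in [seq y <- s | P y] ->
    [/\ f x \in s, Q (f x), f (f x) = x & F (f x) = F x].
  by rewrite mem_filter => /andP[Px sx]; apply: fP.
transitivity (\big[op/idx]_(x <- map f [seq y <- s | P y]) F x).
  by rewrite big_map; apply: eq_big_seq => x /memP[].
apply: perm_big; apply: uniq_perm; last 1 first.
- move=> x; apply/mapP/idP => [[y /memP[sfy Qfy _ _] ->]|].
    by rewrite mem_filter Qfy.
  rewrite mem_filter => /andP[Qx sx]; have [sfx Pfx ffx] := fQ x sx Qx.
  by exists (f x); rewrite ?mem_filter ?Pfx ?ffx.
- rewrite map_inj_in_uniq ?filter_uniq // => x y /memP[_ _ ffx _] /memP[_ _ ffy _].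
  by move=> fxy; rewrite -ffx fxy ffy.
- exact: filter_uniq.
Qed.

Section Squarefree.
Local Open Scope nat_scope.

Lemma squarefree_gt0 {d} : squarefree d -> 0 < d.
Proof. by case/andP. Qed.

Lemma moebius_neq0_squarefree d : moebius d != 0%R -> squarefree d.
Proof. by rewrite /moebius; case: ifP => //; rewrite eqxx. Qed.

Lemma logn_squarefree_le1 p {d} : squarefree d -> logn p d <= 1.
Proof.
case/andP=> _ /allP logn1.
have [pd|pNd] := boolP (p \in primes d); first by rewrite (eqP (logn1 p pd)).
by rewrite leqW // leqn0 eqn0Ngt logn_gt0.
Qed.

Lemma not_squarefree_sq_dvd {n} :
  0 < n -> ~~ squarefree n -> exists2 q, prime q & q ^ 2 %| n.
Proof.
move=> n_gt0; rewrite /squarefree n_gt0 => /allPn[q qn logn_neq1].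
have logn_gt0q := qn; rewrite -logn_gt0 in logn_gt0q.
move: qn; rewrite mem_primes => /andP[q_pr _].
exists q => //; rewrite pfactor_dvdn //.
by case: (logn q n) logn_gt0q logn_neq1 => [|[|]].
Qed.

Lemma squarefree_div_prime {d q} :
  squarefree d -> prime q -> q %| d -> ~~ (q %| d %/ q).
Proof.
move=> d_sqf q_pr qd; have q_gt0 := prime_gt0 q_pr.
have dq_gt0 : 0 < d %/ q by rewrite divn_gt0 // dvdn_leq ?squarefree_gt0.
have := logn_squarefree_le1 q d_sqf.
rewrite -[X in X %| _]expn1 pfactor_dvdn // logn_div // (logn_prime q q_pr) eqxx subn1.
by case: (logn q d) => [|[|]].
Qed.

Lemma prime_dvd_div_squarefree {n d q} :
  prime q -> q ^ 2 %| n -> d %| n -> squarefree d -> q %| n %/ d.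
Proof.
move=> q_pr q2n dn d_sqf; have [->|n_gt0] := posnP n; first by rewrite div0n.
have nd_gt0 : 0 < n %/ d by rewrite divn_gt0 ?squarefree_gt0 // dvdn_leq.
rewrite -[X in X %| _]expn1 pfactor_dvdn // logn_div //.
rewrite pfactor_dvdn // in q2n; have := logn_squarefree_le1 q d_sqf.
by rewrite subn_gt0 => /leq_ltn_trans; apply.
Qed.

Lemma primes_mul_prime {d q} : prime q -> 0 < d -> ~~ (q %| d) ->
  perm_eq (primes (d * q)) (q :: primes d).
Proof.
move=> q_pr d_gt0 qNd; apply: uniq_perm.
- exact: primes_uniq.
- by rewrite /= primes_uniq mem_primes (negbTE qNd) !andbF.
by move=> p; rewrite (primesM _ d_gt0 (prime_gt0 q_pr)) (primes_prime q_pr) !inE orbC.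
Qed.

Lemma squarefreeM_prime d q : prime q -> ~~ (q %| d) ->
  squarefree (d * q) = squarefree d.
Proof.
move=> q_pr qNd; have q_gt0 := prime_gt0 q_pr.
have [->|d_gt0] := posnP d; first by rewrite mul0n.
rewrite /squarefree muln_gt0 d_gt0 q_gt0 /=.
rewrite (perm_all _ (primes_mul_prime q_pr d_gt0 qNd)) /=.
rewrite (lognM _ d_gt0 q_gt0) (logn_prime q q_pr) eqxx.
have /eqP -> : logn q d == 0.
  by rewrite eqn0Ngt logn_gt0 mem_primes (negbTE qNd) !andbF.
apply: eq_in_all => p; rewrite mem_primes => /and3P[_ _ pd].
rewrite (lognM _ d_gt0 q_gt0) (logn_prime p q_pr).
have /negPf -> : p != q by apply: contraNneq qNd => <-.
by rewrite addn0.
Qed.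

Lemma moebiusM_prime d q : prime q -> ~~ (q %| d) ->
  moebius (d * q) = (- moebius d)%R.
Proof.
move=> q_pr qNd; rewrite /moebius squarefreeM_prime //.
case: ifP => [d_sqf|_]; last by rewrite oppr0.
rewrite (perm_size (primes_mul_prime q_pr (squarefree_gt0 d_sqf) qNd)).
by rewrite exprS mulN1r.
Qed.

Lemma moebius_squarefree {n} : squarefree n -> moebius n = 1%R \/ moebius n = (-1)%R.
Proof.
by move=> n_sqf; rewrite /moebius n_sqf -signr_odd; case: odd; [right | left].
Qed.

End Squarefree.

Section Toggle.
Local Open Scope nat_scope.
Variable q : nat.
Hypothesis q_pr : prime q.

Definition toggle d := if q %| d then d %/ q else d * q.

Lemma toggleK d : squarefree d -> toggle (toggle d) = d.
Proof.
rewrite /toggle => d_sqf; have [qd|qNd] := boolP (q %| d).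
  by rewrite (negbTE (squarefree_div_prime d_sqf q_pr qd)) divnK.
by rewrite dvdn_mull // mulnK // prime_gt0.
Qed.

Lemma moebius_toggle d : squarefree d -> moebius (toggle d) = (- moebius d)%R.
Proof.
rewrite /toggle => d_sqf; case: ifP => qd; last by rewrite moebiusM_prime ?qd.
by rewrite -[in RHS](divnK qd) moebiusM_prime ?opprK ?squarefree_div_prime.
Qed.

Lemma toggle_dvd {n d} : q %| n -> d %| n -> toggle d %| n.
Proof.
rewrite /toggle => qn dn; case: ifP => qd; first exact: dvdn_trans (dvdn_div qd) dn.
by rewrite Gauss_dvd ?dn ?qn // coprime_sym prime_coprime ?qd.
Qed.

End Toggle.

Section RadicalInvariant.
Local Open Scope nat_scope.

Lemma radicalM_prime_dvd m q : prime q -> q %| m -> radical (m * q) = radical m.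
Proof.
move=> q_pr qm; have [->|m_gt0] := posnP m; first by rewrite mul0n.
rewrite /radical; congr (\prod_(p <- _) p); apply/eq_primes => p.
rewrite (primesM _ m_gt0 (prime_gt0 q_pr)) (primes_prime q_pr) inE.
by case: eqP => [->|_]; rewrite ?orbF // orbT mem_primes q_pr m_gt0 qm.
Qed.

Variable a : nat -> int.
Hypothesis a_radical : forall n, 1 < n -> a n = a (radical n).

Lemma a_mul_prime_dvd m q : prime q -> q %| m -> a (m * q) = a m.
Proof.
move=> q_pr qm; have [->|m_gt0] := posnP m; first by rewrite mul0n.
have m_gt1 : 1 < m := leq_trans (prime_gt1 q_pr) (dvdn_leq m_gt0 qm).
have mq_gt1 : 1 < m * q := leq_trans m_gt1 (leq_pmulr _ (prime_gt0 q_pr)).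
by rewrite a_radical // [RHS]a_radical // radicalM_prime_dvd.
Qed.

Lemma a_div_mul_prime n e q : prime q -> q ^ 2 %| n ->
  e * q %| n -> squarefree (e * q) -> a (n %/ (e * q)) = a (n %/ e).
Proof.
move=> q_pr q2n eqn eq_sqf.
have e_gt0 : 0 < e by move: (squarefree_gt0 eq_sqf); rewrite muln_gt0 => /andP[].
have := prime_dvd_div_squarefree q_pr q2n eqn eq_sqf; set m := n %/ (e * q) => qm.
by rewrite -[n in n %/ e](divnK eqn) -/m mulnA mulnAC mulnK // a_mul_prime_dvd.
Qed.

Lemma a_toggle n q d : prime q -> q ^ 2 %| n -> d %| n -> squarefree d ->
  a (n %/ toggle q d) = a (n %/ d).
Proof.
move=> q_pr q2n dn d_sqf; have qn : q %| n by apply: dvdn_trans q2n; rewrite dvdn_exp.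
have := toggle_dvd _ q_pr qn dn; rewrite /toggle; case: ifP => qd tdn.
  by rewrite -[in RHS](divnK qd) a_div_mul_prime // divnK.
by rewrite a_div_mul_prime // squarefreeM_prime ?qd.
Qed.

Lemma Aplus_eq_Aminus_nonsquarefree n :
  0 < n -> ~~ squarefree n -> Aplus a n = Aminus a n.
Proof.
move=> n_gt0 n_nsqf; have [q q_pr q2n] := not_squarefree_sq_dvd n_gt0 n_nsqf.
have qn : q %| n by apply: dvdn_trans q2n; rewrite dvdn_exp.
rewrite /Aplus /Aminus; apply: (big_filter_involution (toggle q)) => [|d|d];
  rewrite ?divisors_uniq // -!dvdn_divisors // => dn /eqP mu_d;
  have d_sqf : squarefree d by apply: moebius_neq0_squarefree; rewrite mu_d.
  by split; rewrite ?toggle_dvd ?moebius_toggle ?mu_d ?toggleK ?a_toggle.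
by split; rewrite ?toggle_dvd ?moebius_toggle ?mu_d ?opprK ?toggleK.
Qed.

End RadicalInvariant.

Definition moebius_prod (a : nat -> int) (n : nat) (s : int) : int :=
  \prod_(d <- divisors n | moebius d == s) a (n %/ d)%N.

Lemma moebius_prod_self_eq0 {a n} :
  a 1%N = 0 -> (0 < n)%N -> moebius_prod a n (moebius n) = 0.
Proof.
move=> a1 n_gt0; rewrite /moebius_prod -big_filter (bigD1_seq n) /=.
- by rewrite divnn n_gt0 a1 mul0r.
- by rewrite mem_filter eqxx -dvdn_divisors // dvdnn.
- by rewrite filter_uniq ?divisors_uniq.
Qed.

Lemma dvd_moebius_prod_opp {a n} :
  (forall p : nat, prime p -> ((p : int) %| a p)%Z) -> squarefree n ->
  ((n : int) %| moebius_prod a n (- moebius n))%Z.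
Proof.
move=> a_prime n_sqf; have n_gt0 := squarefree_gt0 n_sqf.
apply/(dvdn_partP _ n_gt0) => p; rewrite mem_primes => /and3P[p_pr _ pn].
have lognp : logn p n = 1%N.
  by apply/anti_leq; rewrite logn_squarefree_le1 // logn_gt0 mem_primes p_pr n_gt0.
have nE : n = (n %/ p * p)%N by rewrite divnK.
have mu_np : moebius (n %/ p)%N = - moebius n.
  by rewrite [in RHS]nE moebiusM_prime ?opprK ?squarefree_div_prime.
have n_div_np : (n %/ (n %/ p))%N = p.
  by rewrite {1}nE mulKn // divn_gt0 ?prime_gt0 // dvdn_leq.
rewrite p_part lognp expn1 /moebius_prod -big_filter (bigD1_seq (n %/ p)%N) /=.
- by rewrite abszM dvdn_mulr // n_div_np; exact: a_prime.
- by rewrite mem_filter mu_np eqxx -dvdn_divisors // dvdn_div.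
- by rewrite filter_uniq ?divisors_uniq.
Qed.

Theorem theorem9 (a : nat -> int) :
  a 1%N = 0 ->
  (forall p : nat, prime p -> ((p : int) %| a p)%Z) ->
  (forall n : nat, (1 < n)%N -> a n = a (radical n)) ->
  forall n : nat, (1 <= n)%N -> (Aplus a n == Aminus a n %[mod (n : int)])%Z.
Proof.
move=> a1 a_prime a_radical n n_gt0.
have [n_sqf|n_nsqf] := boolP (squarefree n); last first.
  by rewrite Aplus_eq_Aminus_nonsquarefree.
have A0 := moebius_prod_self_eq0 a1 n_gt0.
have dvdA := dvd_moebius_prod_opp a_prime n_sqf.
have -> : Aplus a n = moebius_prod a n 1 by [].
have -> : Aminus a n = moebius_prod a n (-1) by [].
have [mu_n|mu_n] := moebius_squarefree n_sqf; rewrite mu_n ?opprK in A0 dvdA.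
- by rewrite eq_sym eqz_mod_dvd A0 subr0.
- by rewrite eqz_mod_dvd A0 subr0.
Qed.
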